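(* Let $n>2k$ and $\ell$ be integers with $k\ge\ell\ge 2$, $X=\{1,\dots,n\}$. Let $\mathcal F\subset\binom{X}{k}$ be a saturated intersecting family, let $\mathcal B=\mathcal B(\mathcal F)$, and let $t=\min\{|B|\colon B\in\mathcal B\}$. Assume $t\ge 2$ and $\tau(\mathcal B^{(\le\ell)})\ge 2$. Then $$|\mathcal B^{(\ell)}|\le t\cdot\ell\cdot k^{\ell-2}.$$
   Context: $\binom{X}{k}$ is the family of $k$-subsets of $X$. A family is intersecting if any two of its members intersect. For $\mathcal G\subset 2^X$, $\mathcal T(\mathcal G):=\{T\subset X\colon |T|\le k,\ T\cap G\neq\emptyset \text{ for all } G\in\mathcal G\}$. An intersecting family $\mathcal F\subset\binom{X}{k}$ is saturated if for every $G\in\binom{X}{k}\setminus\mathcal F$ the family $\mathcal F\cup\{G\}$ is not intersecting. $\mathcal B(\mathcal F)$ denotes the family of inclusion-minimal members of $\mathcal T(\mathcal F)$. For a family $\mathcal H$, $\mathcal H^{(i)}:=\{H\in\mathcal H\colon |H|=i\}$ and $\mathcal H^{(\le \ell)}:=\bigcup_{i=1}^{\ell}\mathcal H^{(i)}$. The covering number $\tau(\mathcal H)$ is the minimum size of a set $T$ with $T\cap H\neq\emptyset$ for all $H\in\mathcal H$ (so $\tau(\mathcal H)\ge 2$ means $\mathcal H$ is nonempty and no single element lies in all members of $\mathcal H$). *)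

From mathcomp Require Import all_boot.
Set Implicit Arguments. Unset Strict Implicit. Unset Printing Implicit Defensive.

(* Ground set X = {1..n} is modelled as 'I_n; families are sets of sets. *)
Section Defs.
Variable n : nat.
Local Notation fam := {set {set 'I_n}}.

Definition ksets (k : nat) : fam := [set A : {set 'I_n} | #|A| == k].

Definition intersecting (F : fam) : Prop :=
  forall A B, A \in F -> B \in F -> A :&: B != set0.

Definition saturated (k : nat) (F : fam) : Prop :=
  F \subset ksets k /\ intersecting F /\
  forall G, G \in ksets k -> G \notin F -> ~ intersecting (G |: F).

Definition transv (k : nat) (G : fam) : fam :=
  [set T : {set 'I_n} | (#|T| <= k) && [forall A in G, T :&: A != set0]].

Definition minTransv (k : nat) (F : fam) : fam :=
  [set T : {set 'I_n} | minset (fun S => S \in transv k F) T].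

Definition layer (H : fam) (i : nat) : fam := [set A in H | #|A| == i].
Definition layer_le (H : fam) (l : nat) : fam :=
  [set A in H | (1 <= #|A| <= l)].

Definition tau_ge2 (H : fam) : Prop :=
  H != set0 /\ forall x : 'I_n, exists2 A, A \in H & x \notin A.
End Defs.

From mathcomp Require Import all_boot.
From mathcomp Require Import zify.
Set Implicit Arguments. Unset Strict Implicit.

(* 1. Saturation and n > 2k make any two members of T(F) intersect: a
      transversal B disjoint from another one B' extends, outside B', to a
      k-set G meeting all of F; by maximality G is in F, yet B' misses G.
   2. If S is properly contained in a minimal transversal B, then S is not a
      transversal, so some A in F misses S, and every member of B containing S
      contains S plus one point of A.  Iterating from S up to size l shows
      that at most k^(l - |S|) members of B^(l) contain S.
   3. Fix B0 in B with |B0| = t and, using tau(B^(<=l)) >= 2, for each x in B0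
      a member B1(x) of B^(<=l) avoiding x.  By 1, every B in B^(l) contains
      some x in B0 and some y in B1(x), with x <> y; by 2 each such pair lies
      in at most k^(l-2) members of B^(l), whence the bound t * l * k^(l-2). *)

Lemma card_bigcup_le (T I : finType) (A : {pred I}) (f : I -> {set T}) :
  #|\bigcup_(i in A) f i| <= \sum_(i in A) #|f i|.
Proof.
elim/big_rec2: _ => [|i m U _ leUm]; first by rewrite cards0.
by rewrite (leq_trans (leq_card_setU (f i) U).1) ?leq_add2l.
Qed.

Lemma ex_subset_card (T : finType) (m : nat) (D : {set T}) :
  m <= #|D| -> exists2 E : {set T}, E \subset D & #|E| = m.
Proof.
elim: m D => [|m IH] D hm; first by exists set0; rewrite ?sub0set ?cards0.
have /card_gt0P [x xD] : 0 < #|D| by lia.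
have cDx : #|D :\ x| = #|D| - 1 by rewrite (cardsD1 x D) xD; lia.
have [E sE cE] := IH (D :\ x) ltac:(lia).
have xE : x \notin E by apply/negP => /(subsetP sE); rewrite !inE eqxx.
exists (x |: E); last by rewrite cardsU1 xE cE.
by rewrite subUset sub1set xD (subset_trans sE) // subD1set.
Qed.

Section SaturatedFamily.
Variables (n k : nat) (F : {set {set 'I_n}}).
Hypotheses (n_gt2k : 2 * k < n) (k_gt0 : 0 < k) (satF : saturated k F).

Lemma saturated_mem (G : {set 'I_n}) :
  #|G| = k -> (forall A, A \in F -> G :&: A != set0) -> G \in F.
Proof.
have [_ [iF maxF]] := satF => cG meetG.
apply/negPn/negP => GnF; apply: (maxF G) => //; first by rewrite inE cG.
move=> A C /setU1P[->|AF] /setU1P[->|CF].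
- by rewrite setIid -card_gt0 cG.
- exact: meetG.
- by rewrite setIC meetG.
- exact: iF.
Qed.

Lemma transv_meet (B B' : {set 'I_n}) :
  B \in transv k F -> B' \in transv k F -> B :&: B' != set0.
Proof.
rewrite !inE => /andP[cB /forall_inP tB] /andP[cB' /forall_inP tB'].
apply/negP => /eqP disBB'.
pose D := ~: (B :|: B').
have cD : #|B| + #|B'| + #|D| = n.
  by have := cardsC (B :|: B'); rewrite /D card_ord cardsU disBB' cards0; lia.
have [E sED cE] := ex_subset_card (m := k - #|B|) (D := D) ltac:(lia).
have disBE : B :&: E = set0.
  apply/setP => x; rewrite !inE; apply/andP => -[xB /(subsetP sED)].
  by rewrite !inE xB.
have GF : B :|: E \in F.
  apply: saturated_mem; first by rewrite cardsU disBE cards0 cE; lia.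
  move=> A AF; apply: contraNneq (tB A AF) => GA0.
  by rewrite -subset0 -GA0 setSI // subsetUl.
have := tB' _ GF; rewrite setIUr setIC disBB' set0U -subset0.
case/negP; apply/subsetP => x; rewrite !inE => /andP[xB' /(subsetP sED)].
by rewrite !inE xB' orbT.
Qed.

End SaturatedFamily.

Definition layer_through (n : nat) (M : {set {set 'I_n}}) (l : nat)
    (S : {set 'I_n}) : {set {set 'I_n}} :=
  [set B in layer M l | S \subset B].

Section MinimalTransversals.
Variables (n k l : nat) (F : {set {set 'I_n}}).
Hypotheses (l_le_k : l <= k) (F_ksets : F \subset ksets n k).
Local Notation M := (minTransv k F).

(* A proper subset S of a minimal transversal is not a transversal, hence
   some member of F misses S. *)
Lemma minTransv_proper_miss (S B : {set 'I_n}) :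
  B \in M -> S \subset B -> #|S| < #|B| ->
  exists2 A, A \in F & S :&: A = set0.
Proof.
rewrite inE => /minsetP[]; rewrite inE => /andP[cB _] minB sSB ltSB.
have SnT : S \notin transv k F.
  by apply: contraTN ltSB => /minB /(_ sSB) ->; rewrite ltnn.
move: SnT; rewrite inE (leq_trans (subset_leq_card sSB) cB) /=.
by case/forall_inPn => A AF /negPn/eqP; exists A.
Qed.

Lemma layer_through_cover (S A : {set 'I_n}) : A \in F ->
  layer_through M l S \subset
  \bigcup_(a in A) layer_through M l (a |: S).
Proof.
move=> AF; apply/subsetP => B; rewrite !inE => /andP[/andP[BM cB] sSB].
have := minsetp BM; rewrite inE.
move/andP => [_ /forall_inP /(_ A AF) /set0Pn [a]]; rewrite inE => /andP[aB aA].
by apply/bigcupP; exists a; rewrite // !inE BM cB subUset sub1set aB sSB.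
Qed.

Lemma card_layer_through (S : {set 'I_n}) :
  #|S| <= l -> #|layer_through M l S| <= k ^ (l - #|S|).
Proof.
move=> lSl; move eD: (l - #|S|) => d.
elim: d S eD lSl => [|d IH] S dS lSl.
  rewrite expn0 -(cards1 S); apply: subset_leq_card; apply/subsetP => B.
  rewrite !inE => /andP[/andP[_ /eqP cB] sSB].
  by rewrite eq_sym eqEcard sSB cB; lia.
have [->|[B]] := set_0Vmem (layer_through M l S); first by rewrite cards0.
rewrite inE => /andP[]; rewrite inE => /andP[BM /eqP cB] sSB.
have [A AF SA] := minTransv_proper_miss BM sSB ltac:(lia).
have cA : #|A| = k by move/subsetP/(_ A AF): F_ksets; rewrite inE => /eqP.
apply: leq_trans (subset_leq_card (layer_through_cover S AF)) _.
apply: leq_trans (card_bigcup_le _ _) _.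
rewrite expnS -[k in k * _]cA -sum_nat_const; apply: leq_sum => a aA.
have aS : a \notin S by move: (in_set0 a); rewrite -SA inE aA andbT => ->.
by apply: IH; rewrite cardsU1 aS; lia.
Qed.

Lemma card_layer_through_pair (x y : 'I_n) :
  2 <= l -> x != y -> #|layer_through M l [set x; y]| <= k ^ (l - 2).
Proof.
move=> l_ge2 xy; have c2 : #|[set x; y]| = 2 by rewrite cards2 xy.
by rewrite -[in l - 2]c2 card_layer_through // c2.
Qed.

End MinimalTransversals.

Lemma layer_cover (n k l : nat) (F : {set {set 'I_n}}) (B0 : {set 'I_n})
    (B1 : 'I_n -> {set 'I_n}) :
  2 * k < n -> 0 < k -> saturated k F -> B0 \in minTransv k F ->
  (forall x, B1 x \in minTransv k F) ->
  layer (minTransv k F) l \subset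
  \bigcup_(x in B0) \bigcup_(y in B1 x) layer_through (minTransv k F) l [set x; y].
Proof.
move=> n_gt2k k_gt0 satF B0M B1M.
have MT B : B \in minTransv k F -> B \in transv k F.
  by rewrite inE => /minsetp.
apply/subsetP => B BL; have BM : B \in minTransv k F by case/setIdP: BL.
have /set0Pn [x] := transv_meet n_gt2k k_gt0 satF (MT _ B0M) (MT _ BM).
rewrite inE => /andP[xB0 xB].
have /set0Pn [y] := transv_meet n_gt2k k_gt0 satF (MT _ (B1M x)) (MT _ BM).
rewrite inE => /andP[yB1 yB].
apply/bigcupP; exists x => //; apply/bigcupP; exists y => //.
by rewrite inE BL subUset !sub1set xB yB.
Qed.

Theorem lemma2p3 (n k l : nat) (F : {set {set 'I_n}}) (t : nat) :
  2 * k < n -> 2 <= l -> l <= k ->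
  saturated k F ->
  (exists2 B, B \in minTransv k F & #|B| = t) ->
  (forall B, B \in minTransv k F -> t <= #|B|) ->
  2 <= t ->
  tau_ge2 (layer_le (minTransv k F) l) ->
  #|layer (minTransv k F) l| <= t * l * k ^ (l - 2).
Proof.
move=> n_gt2k l_ge2 l_le_k satF [B0 B0M <-] _ _ [_ tauB].
have k_gt0 : 0 < k by lia.
have [F_ksets _] := satF.
set M := minTransv k F.
(* tau(B^(<=l)) >= 2 provides, for each x, a member of B^(<=l) avoiding x. *)
pose B1 x := odflt set0 [pick A in layer_le M l | x \notin A].
have B1P x : [/\ B1 x \in M, #|B1 x| <= l & x \notin B1 x].
  rewrite /B1; case: pickP => [A /andP[] | none] /=.
    by rewrite inE => /andP[AM /andP[_ ->]] ->.
  by have [A AL xA] := tauB x; have := none A; rewrite AL xA.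
have B1M x : B1 x \in M by case: (B1P x).
have cover := layer_cover l n_gt2k k_gt0 satF B0M B1M.
apply: leq_trans (subset_leq_card cover) _.
apply: leq_trans (card_bigcup_le _ _) _.
rewrite -mulnA -sum_nat_const; apply: leq_sum => x _.
have [_ cB1 xB1] := B1P x.
apply: leq_trans (card_bigcup_le _ _) _.
apply: (@leq_trans (\sum_(y in B1 x) k ^ (l - 2))).
  apply: leq_sum => y yB1.
  have xy : x != y by apply: contraNneq xB1 => exy; rewrite {1}exy.
  exact: (card_layer_through_pair l_le_k F_ksets l_ge2 xy).
by rewrite sum_nat_const leq_mul2r cB1 orbT.
Qed.
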